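(* Let $T>0$ and let $S:[0,1]\to\mathbb{R}$ be continuous and concave. Define the successor function $\lambda:\mathbb{R}\to\mathbb{R}$ by $\lambda(x)=\min_{p\in[0,1]}\big(px-T\,S(p)\big)$, and the operation $x\oplus_S y=\min_{p\in[0,1]}\big(px+(1-p)y-T\,S(p)\big)=\lambda(x-y)+y$ on $\mathbb{R}$. Then: (1) $S(p)=S(1-p)$ for all $p\in[0,1]$ if and only if $\lambda(x)-\lambda(-x)=x$ for all $x\in\mathbb{R}$; (2) $S(0)=0$ if and only if $\lambda(x)\le 0$ for all $x$ and $\lim_{x\to+\infty}\lambda(x)=0$; (3) $S(1)=0$ if and only if $\lambda(x)\le x$ for all $x$ and $\lim_{x\to-\infty}(\lambda(x)-x)=0$; (4) $S$ satisfies the associativity condition — for all $p_1,p_2\ge 0$ with $p_1+p_2\le1$, $p_1<1$, $p_1+p_2>0$: $S(p_1)+(1-p_1)S\big(\frac{p_2}{1-p_1}\big)=S(p_1+p_2)+(p_1+p_2)S\big(\frac{p_1}{p_1+p_2}\big)$ — making $\oplus_S$ associative on $\mathbb{R}$, if and only if $\lambda(x-\lambda(y))+\lambda(y)=\lambda(\lambda(x-y)+y)$ for all $x,y\in\mathbb{R}$.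
   Context: The operation $\oplus_S$ is the ''thermodynamic semiring'' addition on $\mathbb{R}$ (min-plus convention) associated with the entropy function $S$ at temperature $T$. *)

From HB Require Import structures.
From mathcomp Require Import all_boot all_order all_algebra.
From mathcomp Require Import all_classical all_reals all_analysis.
Set Implicit Arguments. Unset Strict Implicit. Unset Printing Implicit Defensive.
Import Order.TTheory GRing.Theory Num.Theory.
Import numFieldNormedType.Exports.
Local Open Scope classical_set_scope.
Local Open Scope ring_scope.

Definition concave_on01 {R : realType} (S : R -> R) : Prop :=
  forall x y t : R, 0 <= x <= 1 -> 0 <= y <= 1 -> 0 <= t <= 1 ->
    t * S x + (1 - t) * S y <= S (t * x + (1 - t) * y).

(* successor function lambda(x) = min_{p in [0,1]} (p x - T S(p));
   the min exists (S continuous on a compact), so it is the infimum. *)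
Definition lam {R : realType} (T : R) (S : R -> R) (x : R) : R :=
  inf [set p * x - T * S p | p in `[0, 1]%classic].

Definition oplusS {R : realType} (T : R) (S : R -> R) (x y : R) : R :=
  inf [set p * x + (1 - p) * y - T * S p | p in `[0, 1]%classic].

Definition assoc_cond {R : realType} (S : R -> R) : Prop :=
  forall p1 p2 : R, 0 <= p1 -> 0 <= p2 -> p1 + p2 <= 1 -> p1 < 1 -> 0 < p1 + p2 ->
    S p1 + (1 - p1) * S (p2 / (1 - p1)) = S (p1 + p2) + (p1 + p2) * S (p1 / (p1 + p2)).

(* For [0 < p < 1] a supergradient of [S] at [p] gives an [x] at which the minimum
   defining [lam x] is attained exactly at [p]; hence [lam] determines [S] on [(0, 1)].
   At the ends, only weights near [0] matter as [x --> +oo], so [lam x --> - T S(0)],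
   and symmetrically [lam x - x --> - T S(1)] as [x --> -oo].  Both nestings of the
   operation are minima of mixtures of [x, y, z] over the same weight vectors,
   differing only by the entropy terms compared in [assoc_cond]; so [assoc_cond]
   gives associativity, and conversely associativity, tested at points where one
   nesting is attained at prescribed weights, gives [assoc_cond] once
   [S(0) = S(1) = 0] has been extracted from the limits of the identity for [lam]. *)

From Pilot Require Import Defs.
From HB Require Import structures.
From mathcomp Require Import all_boot all_order all_algebra.
From mathcomp Require Import all_classical all_reals all_analysis.
From mathcomp Require Import ring lra.
Set Implicit Arguments.
Unset Strict Implicit.
Unset Printing Implicit Defensive.

Import Order.TTheory GRing.Theory Num.Theory Num.Def.
Import numFieldNormedType.Exports.
Local Open Scope classical_set_scope.
Local Open Scope ring_scope.

Lemma itv01_0 (R : numDomainType) : 0 <= (0 : R) <= 1.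
Proof. by rewrite lexx ler01. Qed.

Lemma itv01_1 (R : numDomainType) : 0 <= (1 : R) <= 1.
Proof. by rewrite lexx ler01. Qed.

Section concave_on01.
Variables (R : realType) (S : R -> R).
Hypothesis hconc : concave_on01 S.

Lemma concave_on01_ge_min p : 0 <= p <= 1 -> minr (S 0) (S 1) <= S p.
Proof.
move=> p01; have := hconc (itv01_1 R) (itv01_0 R) p01.
rewrite mulr1 mulr0 addr0 => /(le_trans _); apply; case/andP: p01 => p0 p1.
have : p * minr (S 0) (S 1) <= p * S 1 by rewrite ler_wpM2l // ge_min lexx orbT.
have : (1 - p) * minr (S 0) (S 1) <= (1 - p) * S 0.
  by rewrite ler_wpM2l ?subr_ge0 // ge_min lexx.
lra.
Qed.

(* Concavity between [p] and [1 - p] bounds [S p] by [2 S (1/2) - S (1 - p)]. *)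
Lemma concave_on01_bounded : exists M, forall p, 0 <= p <= 1 -> S p <= M.
Proof.
exists (2 * S 2^-1 - minr (S 0) (S 1)) => p p01.
have q01 : 0 <= 1 - p <= 1 by case/andP: p01 => *; apply/andP; split; lra.
have half01 : 0 <= (2 : R)^-1 <= 1 by rewrite invr_ge0 ler0n invf_le1 ?ler1n.
have h2 : (2 : R)^-1 * 2 = 1 by rewrite mulVf.
have := hconc p01 q01 half01.
have -> : 2^-1 * p + (1 - 2^-1) * (1 - p) = 2^-1 :> R by lra.
have := concave_on01_ge_min q01; nra.
Qed.

Lemma concave_on01_slope q p r : 0 <= q -> q < p -> p < r -> r <= 1 ->
  (S r - S p) / (r - p) <= (S p - S q) / (p - q).
Proof.
move=> q0 qp pr r1.
have rq : 0 < r - q by lra.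
set t := (r - p) / (r - q).
have et : (r - q) * t = r - p by rewrite /t mulrC mulfVK // gt_eqF.
have t01 : 0 <= t <= 1.
  by apply/andP; split; [apply: divr_ge0 | rewrite /t ler_pdivrMr // mul1r]; lra.
have := hconc (ltac:(apply/andP; split; lra) : 0 <= q <= 1)
              (ltac:(apply/andP; split; lra) : 0 <= r <= 1) t01.
have -> : t * q + (1 - t) * r = p by nra.
rewrite -(ler_pM2l rq) => h.
rewrite ler_pdivrMr ?subr_gt0 // mulrAC ler_pdivlMr ?subr_gt0 //; nra.
Qed.

Lemma concave_on01_supergradient p : 0 < p < 1 ->
  exists m, forall q, 0 <= q <= 1 -> S q <= S p + m * (q - p).
Proof.
case/andP=> p0 p1.
set E := [set (S p - S q) / (p - q) | q in `[0, p[%classic].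
have lbE : lbound E ((S 1 - S p) / (1 - p)).
  by move=> y [q /=]; rewrite in_itv /= => /andP[q0 qp] <-; exact: concave_on01_slope.
exists (inf E) => q /andP[q0 q1].
case: (ltgtP q p) => [qp|pq|->]; last by rewrite subrr mulr0 addr0.
- have : inf E <= (S p - S q) / (p - q).
    by apply: ge_inf; [exists ((S 1 - S p) / (1 - p)) | exists q; rewrite //= in_itv /= q0].
  rewrite ler_pdivlMr ?subr_gt0 //; nra.
- have : (S q - S p) / (q - p) <= inf E.
    apply: lb_le_inf; first by exists ((S p - S 0) / (p - 0)), 0; rewrite //= in_itv /= lexx.
    by move=> y [r /=]; rewrite in_itv /= => /andP[r0 rp] <-; exact: concave_on01_slope.
  rewrite ler_pdivrMr ?subr_gt0 //; nra.
Qed.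

End concave_on01.

Lemma concave_on01_reflect (R : realType) (S : R -> R) :
  concave_on01 S -> concave_on01 (fun p => S (1 - p)).
Proof.
move=> hconc x y t x01 y01 t01 /=.
have -> : 1 - (t * x + (1 - t) * y) = t * (1 - x) + (1 - t) * (1 - y) by ring.
by apply: hconc => //; [case/andP: x01 | case/andP: y01] => *; apply/andP; split; lra.
Qed.

Lemma eq_lam (R : realType) (T : R) (S S' : R -> R) :
  (forall p, 0 <= p <= 1 -> S p = S' p) -> lam T S =1 lam T S'.
Proof.
move=> eqS x; rewrite /lam; congr inf; apply/seteqP; split=> _ [p p01 <-];
  by exists p => //; move: p01; rewrite /= in_itv /= => /eqS ->.
Qed.

Section lam.
Variables (R : realType) (T : R) (S : R -> R).
Hypotheses (hT : 0 < T) (hconc : concave_on01 S).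

Local Notation lam := (lam T S).

Let lam_set_has_lbound x : has_lbound [set p * x - T * S p | p in `[0, 1]%classic].
Proof.
have [M SM] := concave_on01_bounded hconc.
exists (- `|x| - T * M) => y [p /=]; rewrite in_itv /= => p01 <-.
have : T * S p <= T * M by rewrite ler_pM2l // SM.
have : - `|x| <= p * x.
  case/andP: p01 => p0 p1; case: (lerP 0 x) => x0;
    by [rewrite ger0_norm //; nra | rewrite ltr0_norm //; nra].
lra.
Qed.

Lemma lam_le x p : 0 <= p <= 1 -> lam x <= p * x - T * S p.
Proof. by move=> p01; apply: ge_inf => //; exists p; rewrite //= in_itv. Qed.

Lemma lam_ge x c : (forall p, 0 <= p <= 1 -> c <= p * x - T * S p) -> c <= lam x.
Proof.
move=> h; apply: lb_le_inf; first by exists (0 * x - T * S 0), 0; rewrite //= in_itv /= lexx ler01.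
by move=> y [p /=]; rewrite in_itv /= => /h cle <-.
Qed.

Lemma lam_lipschitz x y : lam x <= lam y + `|x - y|.
Proof.
rewrite -lerBlDr; apply: lam_ge => p p01; rewrite lerBlDr.
have := lam_le x p01; case/andP: p01 => p0 p1.
have : p * (x - y) <= `|x - y|.
  by rewrite (le_trans (ler_norm _)) // normrM ger0_norm // ler_piMl.
lra.
Qed.

Lemma lam_continuous : continuous lam.
Proof.
move=> x; apply/cvgrPdist_le => e e0; near=> y.
have : `|x - y| <= e by near: y; apply: cvgr_dist_le.
have := lam_lipschitz x y; have := lam_lipschitz y x; rewrite distrC.
move=> h1 h2 h3; rewrite ler_norml; apply/andP; split; lra.
Unshelve. all: by end_near.
Qed.

Lemma lam_attained p : 0 < p < 1 -> exists x, lam x = p * x - T * S p.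
Proof.
move=> p01; have [m Sm] := concave_on01_supergradient hconc p01.
exists (T * m); apply/le_anti/andP; split.
  by apply: lam_le; case/andP: p01 => *; rewrite !ltW.
apply: lam_ge => q /Sm Sq; have : T * S q <= T * (S p + m * (q - p)) by rewrite ler_pM2l.
lra.
Qed.

Lemma lam_cvgy : S p @[p --> 0^'+] --> S 0 -> lam x @[x --> +oo] --> - T * S 0.
Proof.
move=> S0r; apply/cvgrPdist_le => e e0.
move/cvgrPdist_le/(_ (e / T) (divr_gt0 e0 hT)): S0r.
rewrite near_withinE /= => /nbhs_ballP[d /= d0 Sd].
have [M SM] := concave_on01_bounded hconc.
near=> x.
have x0 : 0 <= x by near: x; apply: nbhs_pinfty_ge; rewrite num_real.
have xM : T * (M - S 0) / d <= x by near: x; apply: nbhs_pinfty_ge; rewrite num_real.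
have := lam_le x (itv01_0 R).
suff : - T * S 0 - e <= lam x by move=> h1 h2; rewrite ler_norml; apply/andP; split; lra.
apply: lam_ge => p /andP[p0 p1]; case: (ltP p d) => [pd|dp].
- have : 0 <= p * x by rewrite mulr_ge0.
  have [->|pn0] := eqVneq p 0; first lra.
  have := Sd p; rewrite /ball /= sub0r normrN ger0_norm // => /(_ pd).
  rewrite lt_neqAle eq_sym pn0 p0 => /(_ isT); rewrite ler_norml => /andP[Sp _].
  have : T * - (e / T) <= T * (S 0 - S p) by rewrite ler_pM2l.
  rewrite mulrN mulrCA divff ?gt_eqF // mulr1; lra.
- have : T * (M - S 0) <= d * x by move: xM; rewrite ler_pdivrMr // [d * x]mulrC.
  have : d * x <= p * x by rewrite ler_wpM2r.
  have : T * S p <= T * M by rewrite ler_pM2l // SM ?p0.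
  lra.
Unshelve. all: by end_near.
Qed.

End lam.

Lemma cvg_at_left_reflect (R : realType) (a : R) : (a - x) @[x --> 0^'+] --> a^'-.
Proof.
move=> P /=; rewrite !nbhs_filterE /at_left /at_right /within /=.
move=> /nbhs_ballP[d /= d0 Pd]; apply/nbhs_ballP; exists d => // x.
rewrite /ball /= sub0r normrN => xd x0; apply: Pd; last by rewrite ltrBlDr ltrDl.
by rewrite /ball /= opprB addrCA subrr addr0.
Qed.

Section lam_reflect.
Variables (R : realType) (T : R) (S : R -> R).
Hypotheses (hT : 0 < T) (hconc : concave_on01 S).

Let Sr (p : R) := S (1 - p).

Let itv01_reflect (p : R) : 0 <= p <= 1 -> 0 <= 1 - p <= 1.
Proof. by case/andP=> *; apply/andP; split; lra. Qed.

Lemma lam_reflect x : lam T S x - x = lam T Sr (- x).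
Proof.
have hconcr := concave_on01_reflect hconc.
apply/le_anti/andP; split.
  apply: lam_ge => p /itv01_reflect/(lam_le hT hconc x); rewrite /Sr; lra.
rewrite lerBrDr; apply: lam_ge => p /itv01_reflect/(lam_le hT hconcr (- x)).
rewrite subKr; lra.
Qed.

Lemma lam_subid_cvgNy : S p @[p --> 1^'-] --> S 1 ->
  (lam T S x - x) @[x --> -oo] --> - T * S 1.
Proof.
move=> S1l; apply/cvgNy_compNP.
have -> : (fun x => lam T S x - x) \o -%R = lam T Sr.
  by apply/funext => x /=; rewrite lam_reflect opprK.
have Sr0 : Sr p @[p --> 0^'+] --> Sr 0.
  by rewrite /Sr subr0; apply: cvg_comp S1l; exact: cvg_at_left_reflect.
by have := lam_cvgy hT (concave_on01_reflect hconc) Sr0; rewrite /Sr subr0.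
Qed.

End lam_reflect.

Definition mixS (R : realType) (T : R) (S : R -> R) (p x y : R) :=
  p * x + (1 - p) * y - T * S p.

Lemma exists_ratio (R : realFieldType) (a b : R) :
  0 <= a <= b -> exists2 t, 0 <= t <= 1 & b * t = a.
Proof.
case/andP=> a0 ab; have [b0|bn0] := eqVneq b 0.
  by exists 0; rewrite ?lexx ?ler01 // mulr0; apply/eqP; rewrite eq_le a0 -b0 ab.
have b0 : 0 < b by rewrite lt_neqAle eq_sym bn0 (le_trans a0).
exists (a / b); last by rewrite mulrCA divff ?mulr1.
by rewrite ler_pdivrMr // mul1r ab divr_ge0 // ltW.
Qed.

Definition lam_identity (R : realType) (T : R) (S : R -> R) :=
  forall x y, lam T S (x - lam T S y) + lam T S y = lam T S (lam T S (x - y) + y).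

Section oplus.
Variables (R : realType) (T : R) (S : R -> R).
Hypotheses (hT : 0 < T) (hconc : concave_on01 S).

Local Notation mix := (mixS T S).
Local Notation oplus := (oplusS T S).

Lemma oplusS_lam x y : oplus x y = lam T S (x - y) + y.
Proof.
have mixE p : mix p x y = (p * (x - y) - T * S p) + y by rewrite /mixS; ring.
have mix_ge p : 0 <= p <= 1 -> lam T S (x - y) + y <= mix p x y.
  by move=> p01; rewrite mixE lerD2r lam_le.
apply/le_anti/andP; split.
  rewrite -lerBlDr; apply: lam_ge => p p01; rewrite lerBlDr -mixE.
  apply: ge_inf; last by exists p; rewrite //= in_itv.
  by exists (lam T S (x - y) + y) => z [q /=]; rewrite in_itv => /mix_ge le <-.
apply: lb_le_inf; first by exists (mix 0 x y), 0; rewrite //= in_itv /= lexx ler01.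
by move=> z [q /=]; rewrite in_itv => /mix_ge le <-.
Qed.

Lemma oplusS_le p x y : 0 <= p <= 1 -> oplus x y <= mix p x y.
Proof. by move=> /(lam_le hT hconc (x - y)); rewrite oplusS_lam /mixS; lra. Qed.

Lemma oplusS_ge c x y : (forall p, 0 <= p <= 1 -> c <= mix p x y) -> c <= oplus x y.
Proof.
by move=> h; rewrite oplusS_lam -lerBlDr; apply: lam_ge => p /h; rewrite /mixS; lra.
Qed.

Lemma oplusS_ge_affine a b c x y : 0 <= a ->
  (forall p, 0 <= p <= 1 -> c <= a * mix p x y + b) -> c <= a * oplus x y + b.
Proof.
move=> a0 h; have [a_eq0|an0] := eqVneq a 0.
  by have := h 0; rewrite a_eq0 !mul0r; apply; rewrite lexx ler01.
have a_gt0 : 0 < a by rewrite lt_neqAle eq_sym an0.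
rewrite -lerBlDr -ler_pdivrMl //; apply: oplusS_ge => p /h.
by rewrite ler_pdivrMl // lerBlDr.
Qed.

Lemma oplusSA_le_l q s x y z : 0 <= q <= 1 -> 0 <= s <= 1 ->
  oplus (oplus x y) z <= mix q (mix s x y) z.
Proof.
move=> q01 s01; apply: (le_trans (oplusS_le _ _ q01)).
have : q * oplus x y <= q * mix s x y.
  by rewrite ler_wpM2l ?oplusS_le //; case/andP: q01.
by rewrite /mixS; lra.
Qed.

Lemma oplusSA_le_r p r x y z : 0 <= p <= 1 -> 0 <= r <= 1 ->
  oplus x (oplus y z) <= mix p x (mix r y z).
Proof.
move=> p01 r01; apply: (le_trans (oplusS_le _ _ p01)).
have : (1 - p) * oplus y z <= (1 - p) * mix r y z.
  by rewrite ler_wpM2l ?oplusS_le // subr_ge0; case/andP: p01.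
by rewrite /mixS; lra.
Qed.

Lemma oplusSA_ge_l c x y z :
  (forall q s, 0 <= q <= 1 -> 0 <= s <= 1 -> c <= mix q (mix s x y) z) ->
  c <= oplus (oplus x y) z.
Proof.
move=> h; apply: oplusS_ge => q q01.
have mixE w : mix q w z = q * w + ((1 - q) * z - T * S q) by rewrite /mixS; ring.
rewrite mixE; apply: oplusS_ge_affine => [|s s01]; first by case/andP: q01.
by rewrite -mixE; apply: h.
Qed.

Lemma oplusSA_ge_r c x y z :
  (forall p r, 0 <= p <= 1 -> 0 <= r <= 1 -> c <= mix p x (mix r y z)) ->
  c <= oplus x (oplus y z).
Proof.
move=> h; apply: oplusS_ge => p p01.
have mixE w : mix p x w = (1 - p) * w + (p * x - T * S p) by rewrite /mixS; ring.
rewrite mixE; apply: oplusS_ge_affine => [|r r01]; first by case/andP: p01 => *; lra.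
by rewrite -mixE; apply: h.
Qed.

(* Both nestings are mixtures of [x, y, z] with the same weights
   [(p, (1 - p) r, (1 - p) (1 - r)) = (q s, q (1 - s), 1 - q)]; they differ only by
   the entropy terms. *)
Lemma mixA p q r s x y z : q = p + (1 - p) * r -> q * s = p ->
  mix q (mix s x y) z - mix p x (mix r y z) =
  T * ((S p + (1 - p) * S r) - (S q + q * S s)).
Proof.
move=> qE qs; transitivity ((q * s - p) * (x - y) +
  T * ((S p + (1 - p) * S r) - (S q + q * S s))); first by rewrite /mixS qE; ring.
by rewrite qs subrr mul0r add0r.
Qed.

Lemma assoc_cond_ends : assoc_cond S -> S 0 = 0 /\ S 1 = 0.
Proof.
move=> hA; have h2 : (0 : R) < 2^-1 by rewrite invr_gt0.
have h21 : (2 : R)^-1 < 1 by rewrite invf_lt1 // ltr1n.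
have := hA 0 2^-1 (lexx 0) (ltW h2); rewrite !add0r => /(_ (ltW h21) ltr01 h2).
rewrite mul0r subr0 divr1 => S0; have S0_eq0 : S 0 = 0 by lra.
have := hA 2^-1 0 (ltW h2) (lexx 0); rewrite !addr0 => /(_ (ltW h21) h21 h2).
by rewrite mul0r divff ?gt_eqF // S0_eq0 mulr0 addr0; split => //; lra.
Qed.

Lemma assoc_cond_weights p q r s : assoc_cond S ->
  0 <= p <= 1 -> 0 <= r <= 1 -> q = p + (1 - p) * r -> q * s = p ->
  S p + (1 - p) * S r = S q + q * S s.
Proof.
move=> hA /andP[p0 p1] /andP[r0 r1] qE qs; have [S0 S1] := assoc_cond_ends hA.
have [p_eq1|pn1] := eqVneq p 1.
  have q_eq1 : q = 1 by rewrite qE p_eq1 subrr mul0r addr0.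
  by move: qs; rewrite q_eq1 p_eq1 mul1r => ->; rewrite S1 subrr !mul0r mulr0.
have [q_eq0|qn0] := eqVneq q 0.
  have p_eq0 : p = 0 by rewrite -qs q_eq0 mul0r.
  have r_eq0 : r = 0 by move: qE; rewrite q_eq0 p_eq0 subr0 mul1r add0r.
  by rewrite q_eq0 p_eq0 r_eq0 S0 mul0r mulr0 !addr0.
have p_lt1 : p < 1 by rewrite lt_neqAle pn1.
have q_gt0 : 0 < q by rewrite lt_neqAle eq_sym qn0 qE; nra.
have := hA p ((1 - p) * r) p0 (ltac:(nra)) (ltac:(nra)) p_lt1 (ltac:(lra)).
rewrite -qE.
have -> : (1 - p) * r / (1 - p) = r by rewrite mulrC mulKf // subr_eq0 eq_sym.
by have -> : p / q = s by rewrite -qs mulrC mulKf ?gt_eqF.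
Qed.

Lemma oplusS_assoc : assoc_cond S -> associative oplus.
Proof.
move=> hA; have mixE p q r s x y z : 0 <= p <= 1 -> 0 <= r <= 1 ->
    q = p + (1 - p) * r -> q * s = p -> mix q (mix s x y) z = mix p x (mix r y z).
  move=> p01 r01 qE qs; apply/eqP; rewrite -subr_eq0 mixA //.
  by rewrite (assoc_cond_weights hA p01 r01 qE qs) subrr mulr0.
move=> x y z; apply/le_anti/andP; split.
- apply: oplusSA_ge_l => q s q01 s01; case/andP: (q01) (s01) => q0 q1 /andP[s0 s1].
  have p01 : 0 <= q * s <= 1 by apply/andP; split; nra.
  have [r r01 rE] : exists2 r, 0 <= r <= 1 & (1 - q * s) * r = q - q * s.
    by apply: exists_ratio; apply/andP; split; nra.
  by rewrite (mixE (q * s) q r s) //; [apply: oplusSA_le_r | rewrite rE; ring].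
- apply: oplusSA_ge_r => p r p01 r01; case/andP: (p01) (r01) => p0 p1 /andP[r0 r1].
  set q := p + (1 - p) * r.
  have q01 : 0 <= q <= 1 by apply/andP; split; rewrite /q; nra.
  have [s s01 qs] : exists2 s, 0 <= s <= 1 & q * s = p.
    by apply: exists_ratio; apply/andP; split; rewrite /q; nra.
  by rewrite -(mixE p q r s) //; apply: oplusSA_le_l.
Qed.

Lemma oplusS_attained_l p y : 0 < p < 1 -> exists x, oplus x y = mix p x y.
Proof.
move=> /(lam_attained hT hconc)[u lamu]; exists (u + y).
by rewrite oplusS_lam addrK lamu /mixS; ring.
Qed.

Lemma oplusS_attained_r p x : 0 < p < 1 -> exists y, oplus x y = mix p x y.
Proof.
move=> /(lam_attained hT hconc)[u lamu]; exists (x - u).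
by rewrite oplusS_lam subKr lamu /mixS; ring.
Qed.

Lemma oplusSA_attained_l q s : 0 < q < 1 -> 0 < s < 1 ->
  exists x y z, oplus (oplus x y) z = mix q (mix s x y) z.
Proof.
move=> q01 /(oplusS_attained_l 0)[x xE]; have [z zE] := oplusS_attained_r (oplus x 0) q01.
by exists x, 0, z; rewrite zE xE.
Qed.

Lemma oplusSA_attained_r p r : 0 < p < 1 -> 0 < r < 1 ->
  exists x y z, oplus x (oplus y z) = mix p x (mix r y z).
Proof.
move=> p01 /(oplusS_attained_l 0)[y yE]; have [x xE] := oplusS_attained_l (oplus y 0) p01.
by exists x, y, 0; rewrite xE yE.
Qed.

(* Choosing [x, y, z] at which one nesting attains its minimum at the prescribed
   weights, associativity bounds the entropy difference of [mixA] from both sides. *)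
Lemma oplusS_assoc_weights p q r s : associative oplus ->
  0 < p < 1 -> 0 < q < 1 -> 0 < r < 1 -> 0 < s < 1 ->
  q = p + (1 - p) * r -> q * s = p -> S p + (1 - p) * S r = S q + q * S s.
Proof.
move=> hA p01 q01 r01 s01 qE qs; have w01 (t : R) : 0 < t < 1 -> 0 <= t <= 1.
  by case/andP=> *; rewrite !ltW.
suff : T * ((S p + (1 - p) * S r) - (S q + q * S s)) = 0.
  by move/eqP; rewrite mulf_eq0 gt_eqF //= subr_eq0 => /eqP.
apply/le_anti/andP; split.
- have [x [y [z xyzE]]] := oplusSA_attained_l q01 s01.
  rewrite -(mixA x y z qE qs) -xyzE -hA subr_le0.
  exact: oplusSA_le_r (w01 _ p01) (w01 _ r01).
- have [x [y [z xyzE]]] := oplusSA_attained_r p01 r01.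
  rewrite -(mixA x y z qE qs) -xyzE hA subr_ge0.
  exact: oplusSA_le_l (w01 _ q01) (w01 _ s01).
Qed.

Lemma assoc_cond_of_oplusS_assoc :
  S 0 = 0 -> S 1 = 0 -> associative oplus -> assoc_cond S.
Proof.
move=> S0 S1 hA p1 p2 p1_ge0 p2_ge0 p12_le1 p1_lt1 p12_gt0.
have [->|p1n0] := eqVneq p1 0.
  by rewrite subr0 divr1 !add0r mul0r S0 mulr0 mul1r add0r addr0.
have [->|p2n0] := eqVneq p2 0.
  by rewrite mul0r S0 mulr0 !addr0 divff // S1 mulr0 addr0.
have [p12_eq1|p12n1] := eqVneq (p1 + p2) 1.
  have -> : p2 / (1 - p1) = 1 by rewrite -p12_eq1 addrC addKr divff.
  by rewrite p12_eq1 S1 mulr0 addr0 divr1 mul1r add0r.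
have p1_gt0 : 0 < p1 by rewrite lt_neqAle eq_sym p1n0.
have p2_gt0 : 0 < p2 by rewrite lt_neqAle eq_sym p2n0.
have p12_lt1 : p1 + p2 < 1 by rewrite lt_neqAle p12n1.
have hp : 0 < 1 - p1 by lra.
apply: oplusS_assoc_weights => //.
- by apply/andP; split; lra.
- by apply/andP; split; lra.
- by rewrite divr_gt0 //= ltr_pdivrMr // mul1r; lra.
- by rewrite divr_gt0 //= ltr_pdivrMr // mul1r; lra.
- by rewrite mulrC divfK ?gt_eqF.
- by rewrite mulrCA divff ?mulr1 // gt_eqF.
Qed.

(* [oplusS] is translation invariant, so associativity reduces to [z = 0]. *)
Lemma oplusS_assocE : associative oplus <-> lam_identity T S.
Proof.
split=> [hA x y | hI x y z]; first by have := hA x y 0; rewrite !oplusS_lam !subr0 !addr0.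
have := hI (x - z) (y - z); rewrite !oplusS_lam.
have -> : x - z - (y - z) = x - y by ring.
have -> : x - (lam T S (y - z) + z) = x - z - lam T S (y - z) by ring.
by move=> hIz; rewrite addrA hIz addrA.
Qed.

End oplus.

Section continuous_entropy.
Variables (R : realType) (T : R) (S : R -> R).
Hypotheses (hT : 0 < T) (hconc : concave_on01 S)
  (hcont : {within `[0, 1], continuous S}).

Local Notation lam := (lam T S).

Let S_cvg_ends : S p @[p --> 0^'+] --> S 0 /\ S p @[p --> 1^'-] --> S 1.
Proof. by have [] := (continuous_within_itvP _ ltr01).1 hcont. Qed.

Let lam_cvgy_S0 : lam x @[x --> +oo] --> - T * S 0.
Proof. exact: lam_cvgy hT hconc S_cvg_ends.1. Qed.

Let lam_subid_cvgNy_S1 : (lam x - x) @[x --> -oo] --> - T * S 1.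
Proof. exact: lam_subid_cvgNy hT hconc S_cvg_ends.2. Qed.

Let scaleT_inj a b : - T * a = - T * b -> a = b.
Proof. by move/mulfI; apply; rewrite oppr_eq0 gt_eqF. Qed.

Lemma S0_eq0_iff : S 0 = 0 <-> (forall x, lam x <= 0) /\ lam x @[x --> +oo] --> 0.
Proof.
split=> [S0 | [_ lam0]].
  split=> [x|]; first by have := lam_le hT hconc x (itv01_0 R); rewrite S0; lra.
  by move: lam_cvgy_S0; rewrite S0 mulr0.
by apply: scaleT_inj; rewrite mulr0; exact: cvg_unique lam_cvgy_S0 lam0.
Qed.

Lemma S1_eq0_iff :
  S 1 = 0 <-> (forall x, lam x <= x) /\ (lam x - x) @[x --> -oo] --> 0.
Proof.
split=> [S1 | [_ lam0]].
  split=> [x|]; first by have := lam_le hT hconc x (itv01_1 R); rewrite S1; lra.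
  by move: lam_subid_cvgNy_S1; rewrite S1 mulr0.
by apply: scaleT_inj; rewrite mulr0; exact: cvg_unique lam_subid_cvgNy_S1 lam0.
Qed.

Lemma S_symmetric_iff : (forall p, 0 <= p <= 1 -> S p = S (1 - p)) <->
  (forall x, lam x - lam (- x) = x).
Proof.
split=> [Ssym x | lamE].
  have SrE : Defs.lam T (fun p => S (1 - p)) =1 lam by apply: eq_lam => p /Ssym.
  by have := lam_reflect hT hconc x; rewrite SrE; lra.
have S_le p : 0 < p < 1 -> S (1 - p) <= S p.
  move=> p01; have [x lamx] := lam_attained hT hconc p01.
  have q01 : 0 <= 1 - p <= 1 by case/andP: p01 => *; apply/andP; split; lra.
  have := lam_le hT hconc (- x) q01; have := lamE x; rewrite lamx => lamEx lamNx.
  by rewrite -(ler_pM2l hT); lra.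
have S01 : S 0 = S 1.
  have lam_cvgy_S1 : lam x @[x --> +oo] --> - T * S 1.
    have -> : lam = (fun x => lam x - x) \o -%R.
      by apply/funext => x /=; have := lamE x; lra.
    exact/cvgNy_compNP.
  by apply: scaleT_inj; exact: cvg_unique lam_cvgy_S0 lam_cvgy_S1.
move=> p /andP[p0 p1]; have [->|pn0] := eqVneq p 0; first by rewrite subr0.
have [->|pn1] := eqVneq p 1; first by rewrite subrr.
have p01 : 0 < p < 1 by rewrite !lt_neqAle eq_sym pn0 pn1 p0 p1.
have q01 : 0 < 1 - p < 1 by case/andP: p01 => *; apply/andP; split; lra.
apply/le_anti/andP; split; last exact: S_le.
by have := S_le _ q01; rewrite subKr.
Qed.

(* Letting [y --> +oo] in the identity at [(x, y)]. *)
Lemma lam_identity_shift : lam_identity T S ->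
  forall x, lam (x + T * S 0) - T * S 0 = lam (x - T * S 1).
Proof.
move=> hI x.
have lamC (g : R -> R) l : g y @[y --> +oo] --> l -> lam (g y) @[y --> +oo] --> lam l.
  by move=> gl; apply: continuous_cvg gl; exact: lam_continuous.
have x_sub_y : (x - y) @[y --> +oo] --> -oo.
  move=> P [M [Mreal MP]]; exists (x - M); split; first by rewrite num_real.
  by move=> y My; apply: MP; lra.
have lhs : (lam (x - lam y) + lam y) @[y --> +oo] --> lam (x + T * S 0) - T * S 0.
  rewrite -mulNr; apply: cvgD; last exact: lam_cvgy_S0.
  rewrite -[T * S 0]opprK -mulNr; apply: lamC; apply: cvgB; [exact: cvg_cst | exact: lam_cvgy_S0].
have rhs : lam (lam (x - y) + y) @[y --> +oo] --> lam (x - T * S 1).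
  have -> : (fun y => lam (lam (x - y) + y)) = (fun y => lam ((lam (x - y) - (x - y)) + x)).
    by apply/funext => y; congr lam; ring.
  rewrite addrC -mulNr; apply: lamC; apply: cvgD; last exact: cvg_cst.
  exact: cvg_comp x_sub_y lam_subid_cvgNy_S1.
rewrite (eq_cvg _ _ (hI x)) in lhs.
exact: cvg_unique lhs rhs.
Qed.

(* Letting [x --> +oo], resp. [x --> -oo], in [lam_identity_shift]. *)
Lemma lam_identity_ends : lam_identity T S -> S 0 = 0 /\ S 1 = 0.
Proof.
move=> /lam_identity_shift shift; split; apply: scaleT_inj; rewrite mulr0.
- have lhs : (lam (x + T * S 0) - T * S 0) @[x --> +oo] --> - T * S 0 - T * S 0.
    by rewrite -mulNr; apply: cvgD; [exact: cvg_comp (cvg_addrr _) lam_cvgy_S0 | exact: cvg_cst].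
  have rhs : lam (x - T * S 1) @[x --> +oo] --> - T * S 0.
    exact: cvg_comp (cvg_addrr _) lam_cvgy_S0.
  rewrite (eq_cvg _ _ shift) in lhs.
  suff : - T * S 0 - T * S 0 = - T * S 0 by lra.
  exact: cvg_unique lhs rhs.
- have lhs : (lam (x + T * S 0) - T * S 0 - x) @[x --> -oo] --> - T * S 1.
    have -> : (fun x => lam (x + T * S 0) - T * S 0 - x) =
              (fun x => lam (x + T * S 0) - (x + T * S 0)) by apply/funext => x; ring.
    exact: cvg_comp (cvg_addrr_Ny _) lam_subid_cvgNy_S1.
  have rhs : (lam (x - T * S 1) - x) @[x --> -oo] --> - T * S 1 - T * S 1.
    have -> : (fun x => lam (x - T * S 1) - x) =
              (fun x => lam (x - T * S 1) - (x - T * S 1) - T * S 1) by apply/funext => x; ring.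
    rewrite -mulNr; apply: cvgD; last exact: cvg_cst.
    exact: cvg_comp (cvg_addrr_Ny _) lam_subid_cvgNy_S1.
  have eq_fn x : lam (x + T * S 0) - T * S 0 - x = lam (x - T * S 1) - x by rewrite shift.
  rewrite (eq_cvg _ _ eq_fn) in lhs.
  suff : - T * S 1 = - T * S 1 - T * S 1 by lra.
  exact: cvg_unique lhs rhs.
Qed.

End continuous_entropy.

Theorem proposition9p1 (R : realType) (T : R) (S : R -> R)
  (hT : 0 < T) (hcont : {within `[0, 1], continuous S})
  (hconc : concave_on01 S) :
  [/\ (forall p, 0 <= p <= 1 -> S p = S (1 - p)) <->
        (forall x, lam T S x - lam T S (- x) = x),
      S 0 = 0 <->
        ((forall x, lam T S x <= 0) /\ lam T S x @[x --> +oo] --> 0),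
      S 1 = 0 <->
        ((forall x, lam T S x <= x) /\ (lam T S x - x) @[x --> -oo] --> 0)
    & (assoc_cond S <->
        (forall x y, lam T S (x - lam T S y) + lam T S y
                     = lam T S (lam T S (x - y) + y))) /\
      (assoc_cond S ->
        forall x y z, oplusS T S (oplusS T S x y) z = oplusS T S x (oplusS T S y z))].
Proof.
split; [exact: S_symmetric_iff | exact: S0_eq0_iff | exact: S1_eq0_iff |].
split=> [|hA x y z]; last by rewrite (oplusS_assoc hT hconc hA).
split=> [/(oplusS_assoc hT hconc)/oplusS_assocE hI | hI]; first exact: hI.
have [S0 S1] := lam_identity_ends hT hconc hcont hI.
by apply: (assoc_cond_of_oplusS_assoc hT hconc S0 S1); apply/oplusS_assocE.
Qed.
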